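(* Let $\mathbf{Sym}$ be the free associative (noncommutative) algebra over $\mathbb{C}$ generated by $S_1,S_2,\dots$, graded by $\deg S_n=n$, let $\widehat{\mathbf{Sym}}$ be its completion (formal sums $\sum_{n\ge 0}f_n$ with $f_n$ homogeneous of degree $n$), and put $S_0=1$ and $\sigma_1=\sum_{n\ge 0}S_n$. Let $K_n\in\mathbf{Sym}$ ($n\ge 0$) be the unique homogeneous elements of degree $n$ with $K_0=1$ such that $$\sigma_1=\sum_{n\ge 0}K_n\,\sigma_1^{\,n},$$ and let $g=\sum_{n\ge0}g_n$ ($g_n$ homogeneous of degree $n$, $g_0=1$) be the unique element of $\widehat{\mathbf{Sym}}$ such that $g=\sum_{n\ge 0}S_n\,g^{\,n}$. Then $$1+\sum_{n\ge 1}K_n \;=\; \big(g^{-1}\big)(-A),$$ where $g^{-1}$ is the multiplicative inverse of $g$ in $\widehat{\mathbf{Sym}}$ and $f\mapsto f(-A)$ is the map defined in the context.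
   Context: The noncommutative elementary functions $\Lambda_n$ are defined by $\Lambda_0=1$ and $\big(\sum_{n\ge0}S_nt^n\big)\big(\sum_{n\ge0}(-1)^n\Lambda_nt^n\big)=1$. For $f\in\widehat{\mathbf{Sym}}$, $f(-A)$ denotes the image of $f$ under the (continuous) algebra automorphism of $\widehat{\mathbf{Sym}}$ sending $S_n\mapsto(-1)^n\Lambda_n$ for all $n\ge1$. *)

From mathcomp Require Import all_boot all_algebra.
Set Implicit Arguments. Unset Strict Implicit. Unset Printing Implicit Defensive.
Import GRing.Theory.
Local Open Scope ring_scope.

(* A word  w = [:: i1; ...; ik] : seq nat  encodes the monomial
   S^I = S_{i1+1} S_{i2+1} ... S_{ik+1}  (I a composition), so the
   words are in bijection with the compositions, which form a basis of Sym.
   Since each homogeneous component of Sym is finite dimensional with basis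
   the S^I, |I| = n, an element of the completion  \hat{Sym}  (formal sums
   of homogeneous elements) is exactly an arbitrary coefficient function
   seq nat -> F.  *)

Definition series (F : fieldType) := seq nat -> F.

Definition deg (w : seq nat) : nat := (\sum_(i <- w) i.+1)%N.

Section NCSF.
Variable F : fieldType.

Definition szero : series F := fun _ => 0.
Definition sone : series F := fun w => (w == [::])%:R.
Definition sadd (f g : series F) : series F := fun w => f w + g w.
Definition sscale (c : F) (f : series F) : series F := fun w => c * f w.
Definition smul (f g : series F) : series F :=
  fun w => \sum_(i < (size w).+1) f (take i w) * g (drop i w).
Fixpoint spow (f : series F) (n : nat) : series F :=
  if n is m.+1 then smul f (spow f m) else sone.

Definition Sgen (n : nat) : series F :=
  if n is m.+1 then (fun w => (w == [:: m])%:R) else sone.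

Definition homogeneous (n : nat) (f : series F) : Prop :=
  forall w, deg w <> n -> f w = 0.

(* It is only used for
   families where G n has order >= n (all coefficients in degree < n vanish),
   in which case the coefficient of a word w is the finite sum over n <= deg w
   (the family is summable in the degree topology). *)
Definition ssum (G : nat -> series F) : series F :=
  fun w => \sum_(n < (deg w).+1) G n w.

Definition sigma1 : series F := ssum Sgen.

(* Lam is the family of noncommutative elementary functions: Lam_0 = 1 and
   (\sum_n S_n t^n)(\sum_n (-1)^n Lam_n t^n) = 1, i.e. the coefficient of t^n
   vanishes for every n >= 1. *)
Definition is_Lambda (Lam : nat -> series F) : Prop :=
  Lam 0%N = sone /\
  forall n, (0 < n)%N -> forall w,
    \sum_(i < n.+1) smul (Sgen i) (sscale ((-1) ^+ (n - i)) (Lam (n - i)%N)) w = 0.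

(* phi is the map f |-> f(-A): the continuous F-algebra automorphism of
   \hat{Sym} sending S_n to (-1)^n Lam_n for all n >= 1.  Continuity is with
   respect to the degree filtration: coefficients of phi f in degrees <= d
   depend only on the coefficients of f in degrees <= d. *)
Definition is_minusA (Lam : nat -> series F) (phi : series F -> series F) : Prop :=
     (forall f g, phi (sadd f g) = sadd (phi f) (phi g)) /\
     (forall c f, phi (sscale c f) = sscale c (phi f)) /\
     (forall f g, phi (smul f g) = smul (phi f) (phi g)) /\
      phi sone = sone /\
      bijective phi /\
      (forall (f g : series F) (d : nat),
          (forall u, (deg u <= d)%N -> f u = g u) ->
          forall w, (deg w <= d)%N -> phi f w = phi g w) /\
     (forall n, (0 < n)%N -> phi (Sgen n) = sscale ((-1) ^+ n) (Lam n)).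

End NCSF.

From HB Require Import structures.
From mathcomp Require Import all_boot all_algebra.
From mathcomp Require Import boolp zify.
Import GRing.Theory.
Local Open Scope ring_scope.

(* Write f_n for the homogeneous component of degree n of f, and put
   twist f := \sum_n f_n sigma_1^n.  The hypothesis on the K_n says that
   twist (\sum_n K_n) = sigma_1, and twist is injective because sigma_1 is 1
   plus terms of positive degree.  Applying f |-> f(-A) to g = \sum_n S_n g^n
   gives G := g(-A) = \sum_n l_n G^n with l_n = (-1)^n Lambda_n, while the
   defining relation of the Lambda_n makes L := \sum_n l_n the two-sided
   inverse of sigma_1, so that also L = \sum_n l_n L^n sigma_1^n.  As l_n is
   homogeneous of degree n, twist (l_n X) = l_n (twist X) sigma_1^n, and an
   induction on the degree yields twist G = L.  Hence
   twist (g^-1(-A)) = L^-1 = sigma_1 = twist (\sum_n K_n). *)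

Section SeriesRing.
Variable F : fieldType.
Local Notation R := (series F).

HB.instance Definition _ := gen_eqMixin R.
HB.instance Definition _ := gen_choiceMixin R.

Lemma series_ext (f g : R) : (forall w, f w = g w) -> f = g.
Proof. exact: funext. Qed.

Definition sopp (f : R) : R := fun w => - f w.

Lemma saddA : associative (@sadd F).
Proof. by move=> f g h; apply: series_ext => w; rewrite /sadd addrA. Qed.
Lemma saddC : commutative (@sadd F).
Proof. by move=> f g; apply: series_ext => w; rewrite /sadd addrC. Qed.
Lemma sadd0 : left_id (szero F) (@sadd F).
Proof. by move=> f; apply: series_ext => w; rewrite /sadd /szero add0r. Qed.
Lemma saddN : left_inverse (szero F) sopp (@sadd F).
Proof. by move=> f; apply: series_ext => w; rewrite /sadd /sopp /szero addNr. Qed.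

HB.instance Definition _ := GRing.isZmodule.Build R saddA saddC sadd0 saddN.

Lemma smul_cons (f g : R) a w :
  smul f g (a :: w) = f [::] * g (a :: w) + smul (fun u => f (a :: u)) g w.
Proof. by rewrite /smul big_ord_recl. Qed.

Lemma smulDl : left_distributive (@smul F) (@sadd F).
Proof.
by move=> f g h; apply: series_ext => w; rewrite /smul /sadd -big_split;
  apply: eq_bigr => i _; rewrite mulrDl.
Qed.
Lemma smulDr : right_distributive (@smul F) (@sadd F).
Proof.
by move=> f g h; apply: series_ext => w; rewrite /smul /sadd -big_split;
  apply: eq_bigr => i _; rewrite mulrDr.
Qed.
Lemma smulZl c (f g : R) : smul (sscale c f) g = sscale c (smul f g).
Proof.
by apply: series_ext => w; rewrite /smul /sscale mulr_sumr;
  apply: eq_bigr => i _; rewrite mulrA.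
Qed.

Lemma smulA : associative (@smul F).
Proof.
move=> f g h; apply: series_ext => w; elim: w f g h => [|a w IH] f g h.
  by rewrite /smul !big_ord1 mulrA.
have tail_fg : (fun u => smul f g (a :: u)) =
    sadd (sscale (f [::]) (fun u => g (a :: u))) (smul (fun u => f (a :: u)) g).
  by apply: funext => u; rewrite smul_cons.
rewrite !smul_cons tail_fg smulDl smulZl /sadd /sscale IH mulrDr addrA /smul !big_ord1.
by rewrite !mulrA.
Qed.

Lemma smul1 : left_id (sone F) (@smul F).
Proof.
move=> f; apply: series_ext => w; rewrite /smul big_ord_recl /sone take0 drop0 mul1r.
by case: w => [|a w]; rewrite ?big_ord0 ?addr0 // big1 ?addr0 // => i _; rewrite mul0r.
Qed.

Lemma smulr1 : right_id (sone F) (@smul F).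
Proof.
move=> f; apply: series_ext => w; rewrite /smul big_ord_recr /= take_size drop_size.
rewrite /sone eqxx mulr1 big1 ?add0r // => i _.
have : drop i w != [::] by rewrite -size_eq0 size_drop subn_eq0 -ltnNge.
by case: (drop _ _) => //= _ _; rewrite mulr0.
Qed.

Lemma sone_neq0 : sone F != szero F.
Proof.
apply/eqP => /(congr1 (fun f : R => f [::])).
by rewrite /sone /szero eqxx => /eqP; rewrite oner_eq0.
Qed.

HB.instance Definition _ :=
  GRing.Zmodule_isNzRing.Build R smulA smul1 smulr1 smulDl smulDr sone_neq0.

End SeriesRing.

Section Truncation.
Context {F : fieldType}.
Local Notation R := (series F).
Implicit Types (f g h : R) (G : nat -> R).

Lemma evalD f g w : (f + g) w = f w + g w. Proof. by []. Qed.
Lemma evalB f g w : (f - g) w = f w - g w. Proof. by []. Qed.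
Lemma evalN f w : (- f) w = - f w. Proof. by []. Qed.
Lemma evalM f g w : (f * g) w = \sum_(i < (size w).+1) f (take i w) * g (drop i w).
Proof. by []. Qed.
Lemma eval_sum I (r : seq I) (P : pred I) (E : I -> R) w :
  (\sum_(i <- r | P i) E i) w = \sum_(i <- r | P i) E i w.
Proof. exact: (big_morph (fun f : R => f w)). Qed.

Lemma deg_take_drop i w : (deg (take i w) + deg (drop i w))%N = deg w.
Proof. by rewrite /deg -big_cat cat_take_drop. Qed.

Lemma deg_lt1 w : (deg w < 1)%N -> w = [::].
Proof. by case: w => // a w; rewrite /deg big_cons. Qed.

Definition agree d f g := forall w, (deg w < d)%N -> f w = g w.
Definition order_ge d f := agree d f 0.

Lemma order_ge0 f : order_ge 0 f. Proof. by []. Qed.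

Lemma agree_order_geB d f g : agree d f g <-> order_ge d (f - g).
Proof.
split=> fg w dw; first by rewrite evalB fg ?subrr.
by apply/eqP; rewrite -subr_eq0; apply/eqP; exact: fg.
Qed.

Lemma agree_eq f g : (forall d, agree d f g) -> f = g.
Proof. by move=> fg; apply: series_ext => w; exact: (fg (deg w).+1). Qed.

Lemma agreeW d e f g : (e <= d)%N -> agree d f g -> agree e f g.
Proof. by move=> le_ed fg w dw; apply: fg; exact: leq_trans le_ed. Qed.

Lemma agree_refl d f : agree d f f.
Proof. by []. Qed.

Lemma agree_sym {d f g} : agree d f g -> agree d g f.
Proof. by move=> fg w dw; rewrite fg. Qed.

Lemma agree_trans {d f g h} : agree d f g -> agree d g h -> agree d f h.
Proof. by move=> fg gh w dw; rewrite fg ?gh. Qed.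

Lemma agreeM {d f f' g g'} : agree d f f' -> agree d g g' -> agree d (f * g) (f' * g').
Proof.
move=> ff' gg' w dw; rewrite !evalM; apply: eq_bigr => i _.
have := deg_take_drop i w => split_w.
by rewrite ff' ?gg' //; lia.
Qed.

Lemma agreeX {d f g} n : agree d f g -> agree d (f ^+ n) (g ^+ n).
Proof. by move=> fg; elim: n => // n IH; rewrite !exprS; exact: agreeM. Qed.

Lemma order_geM a b {f g} : order_ge a f -> order_ge b g -> order_ge (a + b)%N (f * g).
Proof.
move=> fa gb w dw; rewrite evalM big1 // => i _.
have := deg_take_drop i w => split_w.
case: (ltnP (deg (take i w)) a) => [/fa -> | ?]; first by rewrite mul0r.
by rewrite gb ?mulr0 //; lia.
Qed.

Lemma order_geMl a f g : order_ge a f -> order_ge a (f * g).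
Proof. by move/order_geM/(_ (order_ge0 g)); rewrite addn0. Qed.

Lemma order_geMr a f g : order_ge a g -> order_ge a (f * g).
Proof. exact: order_geM (order_ge0 f). Qed.

Lemma agreeMl {n d f g h} : order_ge n h -> agree d f g -> agree (n + d)%N (h * f) (h * g).
Proof.
by move=> hn /agree_order_geB fg; apply/agree_order_geB; rewrite -mulrBr; exact: order_geM.
Qed.

Lemma agreeMr {n d f g h} : order_ge n h -> agree d f g -> agree (d + n)%N (f * h) (g * h).
Proof.
by move=> hn /agree_order_geB fg; apply/agree_order_geB; rewrite -mulrBl; exact: order_geM.
Qed.

End Truncation.

Section SummableSeries.
Context {F : fieldType}.
Local Notation R := (series F).
Implicit Types (f g : R) (G : nat -> R).

Definition summable G := forall n, order_ge n (G n).

Lemma summableMr G f : summable G -> summable (fun n => f * G n).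
Proof. by move=> sG n; exact: order_geMr. Qed.

Lemma big_ord_trunc (a : nat -> F) m N : (m <= N)%N ->
  (forall n, (m <= n < N)%N -> a n = 0) -> \sum_(n < N) a n = \sum_(n < m) a n.
Proof.
move=> le_mN a0; rewrite -!(big_mkord xpredT) (big_cat_nat (n := m)) //=.
by rewrite [X in _ + X]big_nat_cond [X in _ + X]big1 ?addr0 // => i /andP[/a0].
Qed.

Lemma ssum_agree_partial G N : summable G -> agree N (ssum G) (\sum_(n < N) G n).
Proof.
move=> sG w dw; rewrite /ssum eval_sum (@big_ord_trunc (G^~ w) (deg w).+1 N) //.
by move=> n /andP[dn _]; exact: sG.
Qed.

Lemma order_ge_ssum d G : (forall n, order_ge d (G n)) -> order_ge d (ssum G).
Proof. by move=> Gd w dw; rewrite /ssum big1 // => n _; exact: Gd. Qed.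

Lemma agree_ssum d G1 G2 : (forall n, agree d (G1 n) (G2 n)) -> agree d (ssum G1) (ssum G2).
Proof. by move=> G12 w dw; apply: eq_bigr => n _; exact: G12. Qed.

Lemma ssumB G1 G2 : ssum G1 - ssum G2 = ssum (fun n => G1 n - G2 n).
Proof. by apply: series_ext => w; rewrite evalB /ssum -sumrB. Qed.

Lemma mulr_ssumr f G : summable G -> f * ssum G = ssum (fun n => f * G n).
Proof.
move=> sG; apply: series_ext => w.
rewrite (agreeM (agree_refl _ _) (ssum_agree_partial G (deg w).+1 sG) w (ltnSn _)).
by rewrite mulr_sumr eval_sum.
Qed.

Lemma mulr_ssuml f G : summable G -> ssum G * f = ssum (fun n => G n * f).
Proof.
move=> sG; apply: series_ext => w.
rewrite (agreeM (ssum_agree_partial G (deg w).+1 sG) (agree_refl _ _) w (ltnSn _)).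
by rewrite mulr_suml eval_sum.
Qed.

Lemma ssum_delta n f : order_ge n f -> ssum (fun m => if m == n then f else 0) = f.
Proof.
move=> fn; apply: series_ext => w; rewrite /ssum.
rewrite (eq_bigr (fun m : 'I_ _ => if (m : nat) == n then f w else 0)); last first.
  by move=> m _; case: eqP.
rewrite -big_mkcond /= (big_ord1_eq _ (fun _ => f w)); case: ltnP => // dn.
by rewrite fn.
Qed.

Lemma ssum_recl G : summable G -> ssum G = G 0%N + ssum (fun n => G n.+1).
Proof.
move=> sG; apply: series_ext => w; rewrite evalD /ssum big_ord_recl; congr (_ + _).
by rewrite big_ord_recr /= [X in _ + X]sG ?addr0.
Qed.

Lemma ssum_shift G i : summable G -> (forall m, (m < i)%N -> G m = 0) ->
  ssum (fun j => G (i + j)%N) = ssum G.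
Proof.
elim: i G => [|i IH] G sG G0 //.
rewrite [RHS]ssum_recl // G0 // add0r -(IH (fun n => G n.+1)).
- by congr ssum; apply: funext => j; rewrite addSn.
- by move=> n; apply: agreeW (sG n.+1).
- by move=> m im; exact: G0.
Qed.

Lemma sum_antidiag (a : nat -> nat -> F) N :
  \sum_(k < N) \sum_(i < k.+1) a i (k - i)%N = \sum_(i < N) \sum_(j < N - i) a i j.
Proof.
elim: N => [|N IH]; first by rewrite !big_ord0.
rewrite big_ord_recr /= IH [RHS]big_ord_recr /= subSnn big_ord1.
rewrite [X in _ = X + _](eq_bigr (fun i : 'I_N => \sum_(j < N - i) a i j + a i (N - i)%N)).
  by rewrite big_split /= -addrA big_ord_recr /= subnn.
by move=> i _; rewrite subSn ?(ltnW (ltn_ord i)) // big_ord_recr.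
Qed.

Lemma ssum_antidiag (X : nat -> nat -> R) : (forall n m, order_ge (n + m)%N (X n m)) ->
  ssum (fun n => ssum (X n)) = ssum (fun k => \sum_(i < k.+1) X i (k - i)%N).
Proof.
move=> Xnm; apply: series_ext => w; rewrite /ssum.
under [RHS]eq_bigr do rewrite eval_sum.
rewrite (sum_antidiag (fun i j => X i j w)); apply: eq_bigr => n _.
rewrite (@big_ord_trunc (fun j => X n j w) ((deg w).+1 - n)) ?leq_subr // => m /andP[h1 _].
by apply: Xnm; move: (ltn_ord n) h1; lia.
Qed.

End SummableSeries.

Section Homogeneous.
Context {F : fieldType}.
Local Notation R := (series F).
Implicit Types (f g P Q : R) (G : nat -> R).

Lemma spowE f n : spow f n = f ^+ n.
Proof. by elim: n => // n IH; rewrite exprS /= IH. Qed.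

Lemma homogeneous_order_ge n f : homogeneous n f -> order_ge n f.
Proof. by move=> fn w dw; rewrite fn // => def_n; rewrite def_n ltnn in dw. Qed.

Lemma homogeneousM a b f g :
  homogeneous a f -> homogeneous b g -> homogeneous (a + b)%N (f * g).
Proof.
move=> fa gb w dw; rewrite evalM big1 // => i _.
have := deg_take_drop i w => split_w.
case: (eqVneq (deg (take i w)) a) => [da | /eqP/fa ->]; last by rewrite mul0r.
by rewrite gb ?mulr0 // => db; apply: dw; lia.
Qed.

Lemma homogeneousN n f : homogeneous n f -> homogeneous n (- f).
Proof. by move=> fn w dw; rewrite evalN fn ?oppr0. Qed.

Lemma homogeneous_sum n I (r : seq I) (E : I -> R) :
  (forall i, homogeneous n (E i)) -> homogeneous n (\sum_(i <- r) E i).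
Proof. by move=> En w dw; rewrite eval_sum big1 // => i _; exact: En. Qed.

Lemma homogeneous1 : homogeneous 0 (1 : R).
Proof. by case=> // /(_ (big_nil _ _ _ _)). Qed.

Lemma homogeneous_Sgen n : homogeneous n (Sgen F n).
Proof.
case: n => [|n]; first exact: homogeneous1.
by move=> w dw; rewrite /Sgen; case: eqP => // def_w; rewrite def_w /deg big_seq1 in dw.
Qed.

Definition hpart n P : R := fun w => if deg w == n then P w else 0.

Lemma hpart_order_ge n P : order_ge n (hpart n P).
Proof. by move=> w dw; rewrite /hpart (ltn_eqF dw). Qed.

Lemma hpart_homogeneous {n f} m : homogeneous n f -> hpart m f = if m == n then f else 0.
Proof.
move=> fn; apply: series_ext => w; rewrite /hpart.
case: (eqVneq (deg w) m) => [<- | dm]; first by case: eqVneq => // /eqP/fn.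
by case: eqP => // def_m; rewrite fn // -def_m; apply/eqP.
Qed.

Lemma hpart_lt n P : order_ge n.+1 P -> hpart n P = 0.
Proof.
by move=> Pn; apply: series_ext => w; rewrite /hpart; case: eqP => // dw; rewrite Pn // dw.
Qed.

Lemma hpartB n P Q : hpart n (P - Q) = hpart n P - hpart n Q.
Proof. by apply: series_ext => w; rewrite evalB /hpart; case: ifP; rewrite ?subr0. Qed.

Lemma ssum_hpart P : ssum (fun n => hpart n P) = P.
Proof.
apply: series_ext => w; rewrite /ssum /hpart.
under eq_bigr => n _ do rewrite eq_sym.
by rewrite -big_mkcond /= (big_ord1_eq _ (fun _ => P w)) ltnSn.
Qed.

Lemma hpart_ssum_homogeneous G : (forall n, homogeneous n (G n)) ->
  forall n, hpart n (ssum G) = G n.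
Proof.
move=> Gn n; apply: series_ext => w; rewrite /hpart /ssum.
case: eqP => [dw | dw]; last by rewrite Gn.
rewrite dw big_ord_recr /= big1 ?add0r // => i _.
by apply: Gn; rewrite dw; move: (ltn_ord i); lia.
Qed.

Lemma hpart_ssum n G : hpart n (ssum G) = \sum_(k < n.+1) hpart n (G k).
Proof.
apply: series_ext => w; rewrite eval_sum /hpart.
by case: eqP => [<- // | _]; rewrite big1.
Qed.

Lemma sum_antidiag_indicator (t s n : nat) (c : F) :
  \sum_(a < n.+1) (if t == a then (if s == (n - a)%N then c else 0) else 0) =
  if (t + s == n)%N then c else 0.
Proof.
rewrite (eq_bigr (fun a : 'I_ _ =>
    if (a : nat) == t then (if s == (n - t)%N then c else 0) else 0)); last first.
  by move=> a _; rewrite eq_sym; case: eqP => // ->.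
rewrite -big_mkcond /= (big_ord1_eq _ (fun _ => if s == (n - t)%N then c else 0)).
case: (ltnP t n.+1) => ?; case: (eqVneq s (n - t)%N) => ?;
  by case: (eqVneq (t + s)%N n) => ? //; lia.
Qed.

Lemma hpartM n P Q : hpart n (P * Q) = \sum_(a < n.+1) hpart a P * hpart (n - a)%N Q.
Proof.
apply: series_ext => w; rewrite eval_sum /hpart.
rewrite (eq_bigr (fun a : 'I_ _ => \sum_(i < (size w).+1)
   (if deg (take i w) == a then (if deg (drop i w) == (n - a)%N
      then P (take i w) * Q (drop i w) else 0) else 0))); last first.
  move=> a _; rewrite evalM; apply: eq_bigr => i _.
  by case: eqP; case: eqP; rewrite ?mul0r ?mulr0.
rewrite exchange_big /=; under eq_bigr do rewrite sum_antidiag_indicator deg_take_drop.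
by case: eqP => _; [rewrite evalM | rewrite big1].
Qed.

End Homogeneous.

Section Twist.
Context {F : fieldType}.
Local Notation R := (series F).
Local Notation sigma := (sigma1 F).
Implicit Types (f h P Q : R) (G : nat -> R).

Lemma summable_homogeneous G : (forall n, homogeneous n (G n)) -> summable G.
Proof. by move=> Gn n; exact: homogeneous_order_ge. Qed.

Lemma sigma1_agree1 : agree 1 sigma 1.
Proof. by move=> w /deg_lt1 ->; rewrite /sigma1 /ssum /deg big_nil big_ord1. Qed.

(* \sum_n (1 - f)^n converges and is a left inverse of f. *)
Lemma mul_eq1C f h : agree 1 f 1 -> f * h = 1 -> h * f = 1.
Proof.
move=> /agree_sym /agree_order_geB f1 fh.
have summable_geom : summable (fun n => (1 - f) ^+ n).
  by elim=> [|n IH]; rewrite ?exprS //; exact: order_geM f1 IH.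
pose M := ssum (fun n => (1 - f) ^+ n).
have Mf : M * f = 1.
  have -> : f = 1 - (1 - f) by rewrite opprB addrC subrK.
  rewrite mulrBr mulr1 mulr_ssuml // [X in X - _]ssum_recl // expr0.
  suff -> : (fun n => (1 - f) ^+ n * (1 - f)) = (fun n => (1 - f) ^+ n.+1) by rewrite addrK.
  by apply: funext => n; rewrite exprSr.
suff -> : h = M by [].
by rewrite -[h]mul1r -Mf -mulrA fh mulr1.
Qed.

Definition twist P : R := ssum (fun n => hpart n P * sigma ^+ n).

Lemma summable_twist P : summable (fun n => hpart n P * sigma ^+ n).
Proof. by move=> n; apply: order_geMl; exact: hpart_order_ge. Qed.

Lemma twistM_expand P Q : twist (P * Q) = ssum (fun a => hpart a P * twist Q * sigma ^+ a).
Proof.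
pose X a b := hpart a P * (hpart b Q * sigma ^+ b) * sigma ^+ a.
have -> : twist (P * Q) = ssum (fun n => \sum_(a < n.+1) X a (n - a)%N).
  congr ssum; apply: funext => n; rewrite hpartM mulr_suml; apply: eq_bigr => a _.
  by rewrite /X !mulrA -[RHS]mulrA -exprD subnK // -ltnS.
rewrite -ssum_antidiag => [|a b]; last first.
  by apply: order_geMl; exact: order_geM (hpart_order_ge a P) (summable_twist Q b).
congr ssum; apply: funext => a.
rewrite -mulr_ssuml; last exact/summableMr/summable_twist.
by rewrite -mulr_ssumr //; exact: summable_twist.
Qed.

Lemma twistM_agree d P {Q Y} : GRing.comm Y sigma ->
  agree d (twist Q) Y -> agree d (twist (P * Q)) (twist P * Y).
Proof.
move=> Ysigma QY; rewrite twistM_expand [twist P]/twist mulr_ssuml; last exact: summable_twist.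
apply: agree_ssum => a; rewrite -[X in agree _ _ X]mulrA -(commrX a Ysigma) mulrA.
by apply: agreeM => //; apply: agreeM.
Qed.

Lemma twistM P Q : GRing.comm (twist Q) sigma -> twist (P * Q) = twist P * twist Q.
Proof. by move=> Qsigma; apply: agree_eq => d; exact: twistM_agree Qsigma (agree_refl _ _). Qed.

Lemma twistM_homogeneous {n f Q} : homogeneous n f -> twist (f * Q) = f * twist Q * sigma ^+ n.
Proof.
move=> fn; rewrite twistM_expand -[RHS](@ssum_delta _ n); last first.
  by apply: order_geMl; apply: order_geMl; exact: homogeneous_order_ge.
congr ssum; apply: funext => b.
by rewrite (hpart_homogeneous _ fn); case: eqP => [->|]; rewrite ?mul0r.
Qed.

Lemma twist_ssum G : summable G -> twist (ssum G) = ssum (fun k => twist (G k)).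
Proof.
move=> sG; pose X k j := hpart (k + j)%N (G k) * sigma ^+ (k + j).
have -> : twist (ssum G) = ssum (fun n => \sum_(k < n.+1) X k (n - k)%N).
  congr ssum; apply: funext => n; rewrite hpart_ssum mulr_suml; apply: eq_bigr => k _.
  by rewrite /X subnKC // -ltnS.
rewrite -ssum_antidiag => [|k j]; last exact: summable_twist.
congr ssum; apply: funext => k.
apply: (ssum_shift _ k (summable_twist (G k))) => m mk.
by rewrite hpart_lt ?mul0r //; exact: agreeW (sG k).
Qed.

Lemma twist1 : twist 1 = 1.
Proof.
rewrite /twist -[RHS](@ssum_delta _ 0) //.
congr ssum; apply: funext => n.
by rewrite (hpart_homogeneous _ homogeneous1); case: eqP => [->|]; rewrite ?mul0r ?mulr1.
Qed.

Lemma twistB P Q : twist (P - Q) = twist P - twist Q.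
Proof. by rewrite /twist ssumB; congr ssum; apply: funext => n; rewrite hpartB mulrBl. Qed.

Lemma twist_inj : injective twist.
Proof.
move=> P Q eqPQ; apply/eqP; rewrite -subr_eq0; apply/eqP.
have twistD0 : twist (P - Q) = 0 by rewrite twistB eqPQ subrr.
apply: agree_eq => d; elim: d => [|d IH] //.
(* P - Q - twist (P - Q) = \sum_n (P - Q)_n (1 - sigma_1^n) has higher order than P - Q. *)
rewrite -[P - Q]subr0 -{1}twistD0 -{1}(ssum_hpart (P - Q)) ssumB.
apply: order_ge_ssum => n; rewrite -{1}[hpart n _]mulr1 -mulrBr.
have [ltnd | ledn] := ltnP n d.
  by rewrite hpart_lt ?mul0r // => w dw; apply: IH; exact: leq_trans ltnd.
case: n ledn => [|n] ledn; first by rewrite expr0 subrr mulr0.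
have sigmaX_agree1 : order_ge 1 (1 - sigma ^+ n.+1).
  apply/(agree_order_geB _ 1)/agree_sym; rewrite -(expr1n _ n.+1).
  exact: agreeX n.+1 sigma1_agree1.
apply: (@agreeW _ (n.+1 + 1)%N); first by rewrite addn1.
exact: order_geM (hpart_order_ge _ _) sigmaX_agree1.
Qed.

End Twist.

Lemma is_Lambda_homogeneous {F : fieldType} (Lam : nat -> series F) :
  is_Lambda Lam -> forall n, homogeneous n (sscale ((-1) ^+ n) (Lam n)).
Proof.
case=> Lam0 LamS; elim/ltn_ind => -[_ | n IH].
  by move=> w dw; rewrite /sscale Lam0 expr0 mul1r; exact: homogeneous1.
have sum0 : \sum_(i < n.+2) Sgen F i * sscale ((-1) ^+ (n.+1 - i)) (Lam (n.+1 - i)%N) = 0.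
  by apply: series_ext => w; rewrite eval_sum; exact: LamS.
move/eqP: sum0; rewrite big_ord_recl subn0 mul1r addr_eq0 => /eqP ->.
apply/homogeneousN/homogeneous_sum => i; rewrite lift0 subSS.
rewrite -[X in homogeneous X](@subnKC i.+1 n.+1) // subSS.
by apply/homogeneousM/IH; [exact: homogeneous_Sgen | rewrite ltnS leq_subr].
Qed.

Section ContinuousMorphism.
Context {F : fieldType}.
Local Notation R := (series F).
Local Notation sigma := (sigma1 F).
Variable phi : R -> R.
Hypothesis phiD : {morph phi : f g / f + g}.
Hypothesis phiM : {morph phi : f g / f * g}.
Hypothesis phi1 : phi 1 = 1.
Hypothesis phi_cont : forall (f g : R) (d : nat),
  (forall u, (deg u <= d)%N -> f u = g u) ->
  forall w, (deg w <= d)%N -> phi f w = phi g w.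

Lemma phi0 : phi 0 = 0.
Proof. by apply: (addrI (phi 0)); rewrite -phiD !addr0. Qed.

HB.instance Definition _ := GRing.isNmodMorphism.Build R R phi (phi0, phiD).
HB.instance Definition _ := GRing.isMonoidMorphism.Build R R phi (phi1, phiM).

Lemma phi_ssum G : summable G -> phi (ssum G) = ssum (fun n => phi (G n)).
Proof.
move=> sG; apply: series_ext => w.
rewrite (phi_cont _ (\sum_(n < (deg w).+1) G n) (deg w)) // => [|u du].
  by rewrite rmorph_sum eval_sum.
exact: ssum_agree_partial.
Qed.

Section MainArgument.
Variables (K : nat -> R) (g ginv : R) (Lam : nat -> R).
Hypothesis K_homogeneous : forall n, homogeneous n (K n).
Hypothesis sigma1_K : sigma1 F = ssum (fun n => smul (K n) (spow (sigma1 F) n)).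
Hypothesis g_fixpoint : g = ssum (fun n => smul (Sgen F n) (spow g n)).
Hypothesis ginvK : ginv * g = 1.
Hypothesis Lambda : is_Lambda Lam.
Hypothesis phi_Sgen : forall n, (0 < n)%N -> phi (Sgen F n) = sscale ((-1) ^+ n) (Lam n).

Local Notation lambda n := (phi (Sgen F n)).
Local Notation L := (ssum (fun n => lambda n)).

Lemma lambdaE n : lambda n = sscale ((-1) ^+ n) (Lam n).
Proof.
case: n => [|n]; last exact: phi_Sgen.
by rewrite phi1 Lambda.1; apply: series_ext => w; rewrite /sscale mul1r.
Qed.

Lemma homogeneous_lambda n : homogeneous n (lambda n).
Proof. by rewrite lambdaE; exact: is_Lambda_homogeneous. Qed.

Lemma summable_lambda : summable (fun n => lambda n).
Proof. exact: summable_homogeneous homogeneous_lambda. Qed.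

Lemma mul_sigma1_L : sigma * L = 1.
Proof.
have summable_Sgen := summable_homogeneous _ (@homogeneous_Sgen F).
have -> : sigma * L = ssum (fun k => \sum_(i < k.+1) Sgen F i * lambda (k - i)%N).
  rewrite -(ssum_antidiag (fun i j => Sgen F i * lambda j)) => [|i j]; last first.
    exact: order_geM (summable_Sgen i) (summable_lambda j).
  rewrite mulr_ssuml //; congr ssum; apply: funext => n.
  by rewrite mulr_ssumr //; exact: summable_lambda.
rewrite -[RHS](@ssum_delta _ 0) //; congr ssum; apply: funext => -[|k].
  by rewrite big_ord1 phi1 mulr1.
apply: series_ext => w; rewrite eval_sum.
under eq_bigr do rewrite lambdaE.
exact: Lambda.2.
Qed.

Lemma mul_L_sigma1 : L * sigma = 1.
Proof. exact: mul_eq1C sigma1_agree1 mul_sigma1_L. Qed.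

Lemma commr_sigma1_L : GRing.comm sigma L.
Proof. by rewrite /GRing.comm mul_L_sigma1 mul_sigma1_L. Qed.

Lemma phi_g_fixpoint : phi g = ssum (fun n => lambda n * phi g ^+ n).
Proof.
rewrite {1}g_fixpoint phi_ssum => [|n]; last first.
  by apply: order_geMl; exact: homogeneous_order_ge (homogeneous_Sgen n).
by congr ssum; apply: funext => n; rewrite spowE rmorphM rmorphXn.
Qed.

Lemma twist_phi_g : twist (phi g) = L.
Proof.
apply: agree_eq => d; elim: d => [|d IH] //.
have twistX n : agree d (twist (phi g ^+ n)) (L ^+ n).
  elim: n => [|n IHn]; first by rewrite !expr0 twist1.
  have LX_sigma1 := commr_sym (commrX n commr_sigma1_L).
  rewrite !exprS; apply: agree_trans (twistM_agree d (phi g) LX_sigma1 IHn) _.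
  exact: agreeM IH (agree_refl _ _).
have L_fixpoint : L = ssum (fun n => lambda n * L ^+ n * sigma ^+ n).
  congr ssum; apply: funext => n.
  rewrite -mulrA -exprMn_comm ?mul_L_sigma1 ?expr1n ?mulr1 //.
  exact: commr_sym commr_sigma1_L.
rewrite {1}phi_g_fixpoint twist_ssum => [|n]; last first.
  by apply: order_geMl; exact: summable_lambda.
rewrite [X in agree _ _ X]L_fixpoint; apply: agree_ssum => -[|n].
  by rewrite !expr0 !mulr1 phi1 twist1.
rewrite (twistM_homogeneous (homogeneous_lambda n.+1)).
apply: (@agreeW _ (n.+1 + d + 0)%N); first by rewrite addn0 addSn ltnS leq_addl.
exact: agreeMr (order_ge0 _) (agreeMl (summable_lambda n.+1) (twistX n.+1)).
Qed.

Lemma twist_phi_ginv : twist (phi ginv) = sigma.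
Proof.
have : twist (phi ginv) * L = 1.
  rewrite -twist_phi_g -twistM; last by rewrite twist_phi_g; exact: commr_sym commr_sigma1_L.
  by rewrite -rmorphM ginvK rmorph1 twist1.
by move/(congr1 (fun x => x * sigma)); rewrite -mulrA mul_L_sigma1 mulr1 mul1r.
Qed.

Lemma ssum_K_phi_ginv : ssum K = phi ginv.
Proof.
apply: twist_inj; rewrite twist_phi_ginv [RHS]sigma1_K.
by congr ssum; apply: funext => n; rewrite (hpart_ssum_homogeneous _ K_homogeneous) spowE.
Qed.

End MainArgument.
End ContinuousMorphism.

Theorem mainTheorem1 (F : fieldType)
    (K : nat -> series F) (g ginv : series F)
    (Lam : nat -> series F) (phi : series F -> series F) :
  (* K_n homogeneous of degree n, K_0 = 1, sigma_1 = sum_n K_n sigma_1^n *)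
  (forall n, homogeneous n (K n)) ->
  K 0%N = sone F ->
  sigma1 F = ssum (fun n => smul (K n) (spow (sigma1 F) n)) ->
  (* g = sum_n S_n g^n *)
  g = ssum (fun n => smul (Sgen F n) (spow g n)) ->
  (* ginv is the inverse of g *)
  smul g ginv = sone F -> smul ginv g = sone F ->
  (* the Lambda_n and f |-> f(-A) *)
  is_Lambda Lam -> is_minusA Lam phi ->
  sadd (sone F) (ssum (fun n => if n is 0%N then szero F else K n)) = phi ginv.
Proof.
move=> K_hom K0 sigma1_K g_fixpoint _ ginvK Lambda
  [phiD [_ [phiM [phi1 [_ [phi_cont phi_Sgen]]]]]].
rewrite -(ssum_K_phi_ginv phi phiD phiM phi1 phi_cont K g ginv Lam
  K_hom sigma1_K g_fixpoint ginvK Lambda phi_Sgen).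
by apply: series_ext => w; rewrite /sadd /ssum !big_ord_recl K0 /szero add0r.
Qed.
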